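(* Let $q\ge 7$ be a prime power and let $C$ be an independent set of the Kneser graph of flags of type $\{2,3\}$ of $\mathrm{PG}(6,q)$ such that every plane and every solid of $\mathrm{PG}(6,q)$ is contained in at most $q+1$ flags of $C$. Then $$|C|\le 24q^{10}+79q^9+155q^8+210q^7+216q^6+187q^5+140q^4+93q^3+51q^2+22q+5.$$
   Context: Dimensions are projective (planes 2, solids 3). A flag of type $\{2,3\}$ is a pair $(E,S)$ of a plane $E$ and a solid $S$ with $E\subseteq S$; the Kneser graph has these flags as vertices, distinct flags $(E,S),(E',S')$ being adjacent iff $E\cap S'=\emptyset$ and $E'\cap S=\emptyset$. An independent set is a set of pairwise non-adjacent vertices. *)

From HB Require Import structures.
From mathcomp Require Import all_boot all_order all_algebra all_field.
Set Implicit Arguments. Unset Strict Implicit. Unset Printing Implicit Defensive.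
Import GRing.Theory.
Import VectorInternalTheory.

(* Subspaces of a finite-dimensional vector space over a finite field form a
   finite type (they are a subtype of a finite type of matrices). *)
HB.instance Definition _ (F : finFieldType) (vT : vectType F) :=
  [Finite of {vspace vT} by <:].

(* PG(6,q) is the lattice of subspaces of F^7 with #|F| = q.
   Projective dimension d  <->  vector dimension d+1. *)
Definition PGpoint (F : finFieldType) := 'rV[F]_7.
Definition PGsub (F : finFieldType) := {vspace 'rV[F]_7}.

Definition is_plane (F : finFieldType) (E : PGsub F) := \dim E == 3%N.
Definition is_solid (F : finFieldType) (S : PGsub F) := \dim S == 4%N.

Definition is_flag23 (F : finFieldType) (f : PGsub F * PGsub F) :=
  [&& is_plane f.1, is_solid f.2 & (f.1 <= f.2)%VS].

(* Kneser-graph adjacency: distinct flags with E ∩ S' = ∅ and E' ∩ S = ∅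
   (projectively empty = zero vector subspace) *)
Definition kneser_adj (F : finFieldType) (f g : PGsub F * PGsub F) :=
  [&& f != g, (f.1 :&: g.2)%VS == 0%VS & (g.1 :&: f.2)%VS == 0%VS].

Definition kneser_independent (F : finFieldType) (C : {set PGsub F * PGsub F}) :=
  {subset C <= is_flag23 (F:=F)} /\
  forall f g, f \in C -> g \in C -> ~~ kneser_adj f g.

(* Orthogonality maps a flag (E, S) of type {2,3} of PG(6,q) to the flag
   (S^perp, E^perp) of the same type; this duality preserves independence and
   swaps the conditions on planes and on solids, so every bound below has a dual.
   The basic counts, of subspaces through a point or a line that meet two given
   subspaces outside it, come from double counting vectors against subspaces.

   If some f0 = (E0, S0) in C has E0 disjoint from the plane E1 of some f1 in C,
   and S0 + S2 is the whole space for some f2 in C, then non-adjacency to f0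
   puts every g = (E, S) of C in one of four families: E meets E0; dually,
   S + S0 is not the whole space; S meets E0 outside E; or the dual of the last.
   A plane meeting E0 also meets E1 or S1 unless S meets E1 outside E, which
   bounds the first family; the third is counted through the points of E0.
   Otherwise each flag of C has its plane meeting all planes of C, or dually;
   the planes of such flags meet two fixed distinct planes, so there are few of
   them, and each carries at most q + 1 flags of C. *)

From mathcomp Require Import all_boot all_order all_algebra all_field.
From mathcomp Require Import zify ring.
Set Implicit Arguments. Unset Strict Implicit. Unset Printing Implicit Defensive.
Import GRing.Theory.

Lemma card_set_in_sum (T : finType) (B : {pred T}) (P : pred T) :
  #|[set b in B | P b]| = \sum_(b in B) P b.
Proof. by rewrite -sum1dep_card big_mkcondr. Qed.

Section DoubleCounting.
Variables T1 T2 : finType.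
Implicit Types (A : {set T1}) (B : {set T2}) (R : T1 -> T2 -> bool).

Lemma card_mul_leq_sum_card A B R c :
  (forall a, a \in A -> c <= #|[set b in B | R a b]|) ->
  #|A| * c <= \sum_(b in B) #|[set a in A | R a b]|.
Proof.
move=> Hc; rewrite -sum_nat_const.
under [X in _ <= X]eq_bigr do rewrite card_set_in_sum.
by rewrite exchange_big /=; apply: leq_sum => a aA; rewrite -card_set_in_sum Hc.
Qed.

Lemma card_mul_leq A B R c M :
  (forall a, a \in A -> c <= #|[set b in B | R a b]|) ->
  (forall b, b \in B -> #|[set a in A | R a b]| <= M) ->
  #|A| * c <= #|B| * M.
Proof.
move=> Hc HM; apply: leq_trans (card_mul_leq_sum_card Hc) _.
by rewrite -sum_nat_const leq_sum.
Qed.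

Lemma card_leq_image_fibres A (g : T1 -> T2) M :
  (forall a, a \in A -> #|[set b in A | g b == g a]| <= M) ->
  #|A| <= #|g @: A| * M.
Proof.
move=> HM; rewrite -[#|A|]muln1.
apply: (card_mul_leq (R := fun a y => g a == y)) => [a aA | _ /imsetP [a aA ->]].
  by rewrite card_gt0; apply/set0Pn; exists (g a); rewrite inE imset_f ?eqxx.
exact: HM.
Qed.

End DoubleCounting.

(* The q-integer [k]_q; predn_exp reads (q ^ k).-1 = q.-1 * [k]_q. *)
Definition qint (q k : nat) := \sum_(i < k) q ^ i.

Lemma leq_qint q k l : k <= l -> qint q k <= qint q l.
Proof. by move=> kl; rewrite /qint -(subnKC kl) big_split_ord leq_addr. Qed.

Lemma qint0 q : qint q 0 = 0. Proof. exact: big_ord0. Qed.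

Lemma qint2 q : qint q 2 = q.+1.
Proof. by rewrite /qint big_ord_recr big_ord1 /= expn0 expn1 add1n. Qed.

Lemma qint_gt0 q k : 0 < k -> 0 < qint q k.
Proof. by case: k => // k _; rewrite /qint big_ord_recl expn0 leq_addr. Qed.

Lemma dim_rV (K : fieldType) m : \dim (fullv : {vspace 'rV[K]_m}) = m.
Proof. by rewrite dimvf /dim /= mul1n. Qed.

Section VectorSpaces.
Variables (K : fieldType) (vT : vectType K).
Implicit Types (U W X A B : {vspace vT}) (x w : vT).

Lemma capv_line0 U w : w \notin U -> (U :&: <[w]> = 0)%VS.
Proof.
move=> wU; apply/eqP; rewrite -subv0; apply/subvP => x /memv_capP [xU /vlineP [k xk]].
have [k0|nzk] := eqVneq k 0%R; first by rewrite xk k0 scale0r mem0v.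
by case/negP: wU; rewrite -(scalerK nzk w) -xk; apply: memvZ.
Qed.

Lemma capv_not_sub X A B : (X :&: B = 0)%VS -> (X :&: A != 0)%VS -> ~~ (X :&: A <= B)%VS.
Proof. by move=> XB0; apply: contra => sXAB; rewrite -subv0 -XB0 subv_cap capvSl. Qed.

Lemma dim_addv_line U w : w \notin U -> \dim (U + <[w]>) = (\dim U).+1.
Proof.
move=> wU; have nz_w : (w != 0)%R by apply: contraNneq wU => ->; exact: mem0v.
by rewrite dimv_disjoint_sum ?capv_line0 // dim_vline nz_w addn1.
Qed.

Lemma dimv_cap_ltl U W :
  \dim U = \dim W -> U != W -> \dim (U :&: W) < \dim U.
Proof.
move=> dUW nUW; rewrite (ltn_leqif (dimv_leqif_sup (capvSl U W))) subv_cap subvv /=.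
by apply: contra nUW => sUW; rewrite eqEdim sUW dUW leqnn.
Qed.

Lemma dimv_cap_disjoint_leq X A B : (X :&: A = 0)%VS -> (A <= B)%VS ->
  \dim (X :&: B) + \dim A <= \dim B.
Proof.
move=> XA0 sAB; have XBA0 : (X :&: B :&: A = 0)%VS.
  by apply/eqP; rewrite -subv0 -XA0 capvS ?capvSl.
by rewrite -dimv_disjoint_sum // dimvS // subv_add capvSr sAB.
Qed.

End VectorSpaces.

Section SubspaceCounting.
Variables (F : finFieldType) (n : nat).
Local Notation V := 'rV[F]_n.
Local Notation q := #|F|.
Implicit Types (U W P X A B : {vspace V}) (x : V).

Lemma predn_card_gt0 : 0 < q.-1.
Proof. by rewrite -subn1 subn_gt0 finNzRing_gt1. Qed.

Lemma expn_predn_gt0 d : 0 < q ^ d * q.-1.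
Proof. by rewrite muln_gt0 expn_gt0 predn_card_gt0 (ltnW (finNzRing_gt1 F)). Qed.

Lemma card_vspaceD P W : (P <= W)%VS ->
  #|[set x in W | x \notin P]| = q ^ \dim P * q.-1 * qint q (\dim W - \dim P).
Proof.
move=> sPW; have -> : [set x in W | x \notin P] = [set x in W] :\: [set x in P].
  by apply/setP => x; rewrite !inE andbC.
rewrite cardsD (setIidPr _); last by apply/subsetP => x; rewrite !inE => /(subvP sPW).
rewrite !cardsE !card_vspace -mulnA -predn_exp -subn1 mulnBr muln1 -expnD subnKC //.
exact: dimvS.
Qed.

Lemma card_vspaceD_ge P X : (P <= X)%VS -> ~~ (X <= P)%VS ->
  q ^ \dim P * q.-1 <= #|[set x in X | x \notin P]|.
Proof.
move=> sPX nXP; rewrite card_vspaceD // -{1}[_ * _]muln1 leq_mul2l qint_gt0 ?orbT //.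
by rewrite subn_gt0; have := dimv_leqif_sup sPX; rewrite (negbTE nXP) => /leqifP.
Qed.

Lemma card_supspaces m e U : \dim U + m + e = n ->
  #|[set W | (\dim W == \dim U + m) && (U <= W)%VS]| * \prod_(j < m) qint q j.+1
  <= \prod_(j < m) qint q (e + j.+1).
Proof.
elim: m U => [|m IH] U dU.
  rewrite !big_ord0 !muln1 -[X in _ <= X](cards1 U) subset_leq_card //; apply/subsetP => W.
  by rewrite !inE addn0 => /andP [/eqP dW sUW]; rewrite eq_sym eqEdim sUW dW leqnn.
set S := [set W | _]; set B := [set x in (fullv : {vspace V}) | x \notin U].
set P1 := \prod_(j < m) qint q j.+1; set P2 := \prod_(j < m) qint q (e + j.+1).
have cardS : #|S| * (q ^ \dim U * q.-1 * qint q m.+1)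
             <= \sum_(w in B) #|[set W in S | w \in W]|.
  apply: card_mul_leq_sum_card => W; rewrite inE => /andP [/eqP dW sUW].
  rewrite (eq_card (B := [set x in W | x \notin U])) ?card_vspaceD ?dW ?addKn //.
  by move=> x; rewrite !inE memvf andbC.
have fibre w : w \in B -> #|[set W in S | w \in W]| * P1 <= P2.
  rewrite inE memvf => wU; apply: leq_trans (IH (U + <[w]>)%VS _); last first.
    by rewrite dim_addv_line // addSnnS.
  rewrite leq_mul2r subset_leq_card ?orbT //; apply/subsetP => W.
  rewrite !inE => /andP [/andP [/eqP dW sUW] wW].
  by rewrite dim_addv_line // dW addSnnS eqxx subv_add sUW -memvE.
have cardB : #|B| = q ^ \dim U * q.-1 * qint q (e + m.+1).
  by rewrite card_vspaceD ?subvf // dim_rV (_ : n - _ = e + m.+1) //; lia.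
have key : #|S| * (q ^ \dim U * q.-1 * qint q m.+1) * P1 <= #|B| * P2.
  apply: leq_trans (leq_mul cardS (leqnn _)) _.
  by rewrite big_distrl -sum_nat_const leq_sum.
rewrite big_ord_recr [X in _ <= X]big_ord_recr /= -/P1 -/P2.
rewrite -(@leq_pmul2l (q ^ \dim U * q.-1)) ?expn_predn_gt0 //.
apply: leq_trans (leq_trans _ key) _; apply: eq_leq; rewrite ?cardB; ring.
Qed.

Lemma card_meet_outside_leq P X k M : (P <= X)%VS ->
  (forall U, \dim U = (\dim P).+1 -> #|[set W | (\dim W == k) && (U <= W)%VS]| <= M) ->
  #|[set W | [&& \dim W == k, (P <= W)%VS & ~~ (W :&: X <= P)%VS]]|
  <= qint q (\dim X - \dim P) * M.
Proof.
move=> sPX HM; rewrite -(@leq_pmul2r (q ^ \dim P * q.-1)) ?expn_predn_gt0 //.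
rewrite mulnAC [qint _ _ * _]mulnC -card_vspaceD //.
apply: (card_mul_leq (R := fun W x => x \in W)) => [W | x].
  rewrite inE => /and3P [_ sPW nWX]; apply: leq_trans (card_vspaceD_ge _ nWX) _.
    by rewrite subv_cap sPW.
  apply: subset_leq_card; apply/subsetP => x.
  by rewrite !inE memv_cap => /andP [/andP [-> ->] ->].
rewrite inE => /andP [_ xP]; apply: leq_trans (HM (P + <[x]>)%VS _); last first.
  exact: dim_addv_line.
apply: subset_leq_card; apply/subsetP => W; rewrite !inE => /andP [/and3P [-> sPW _] xW].
by rewrite subv_add sPW -memvE.
Qed.

Lemma card_meet_both_leq P A B k M : (P <= A)%VS -> (P <= B)%VS ->
  (forall U, \dim U = (\dim P).+2 -> #|[set W | (\dim W == k) && (U <= W)%VS]| <= M) ->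
  #|[set W | [&& \dim W == k, (P <= W)%VS, (W :&: (A :&: B) <= P)%VS,
                 ~~ (W :&: A <= P)%VS & ~~ (W :&: B <= P)%VS]]|
  <= qint q (\dim A - \dim P) * qint q (\dim B - \dim P) * M.
Proof.
move=> sPA sPB HM; set c := q ^ \dim P * q.-1.
have cc_gt0 : 0 < c * c by rewrite muln_gt0 expn_predn_gt0.
rewrite -(leq_pmul2r cc_gt0).
have -> : qint q (\dim A - \dim P) * qint q (\dim B - \dim P) * M * (c * c)
    = #|setX [set x in A | x \notin P] [set y in B | y \notin P]| * M.
  by rewrite cardsX !card_vspaceD // -/c; ring.
apply: (card_mul_leq (R := fun W xy => (xy.1 \in W) && (xy.2 \in W))) => [W | [x y]].
  rewrite inE => /and5P [_ sPW _ nWA nWB].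
  apply: leq_trans (leq_mul (card_vspaceD_ge _ nWA) (card_vspaceD_ge _ nWB)) _;
    rewrite ?subv_cap ?sPW ?sPA ?sPB // -cardsX.
  apply: subset_leq_card; apply/subsetP => -[x y].
  by rewrite !inE !memv_cap /= => /andP [/andP [/andP [-> ->] ->] /andP [/andP [-> ->] ->]].
rewrite !inE /= => /andP [/andP [xA xP] /andP [yB yP]].
have [-> | [W0]] := set_0Vmem [set W in [set W | [&& \dim W == k, (P <= W)%VS,
    (W :&: (A :&: B) <= P)%VS, ~~ (W :&: A <= P)%VS & ~~ (W :&: B <= P)%VS]]
    | (x \in W) && (y \in W)]; first by rewrite cards0.
rewrite !inE => /andP [/and5P [_ _ sW0 _ _] /andP [xW0 yW0]].
(* Any W0 counted at (x, y) forces y \notin P + <[x]>, so every W counted there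
   contains the subspace P + <[x]> + <[y]> of dimension (\dim P).+2. *)
have yPx : y \notin (P + <[x]>)%VS.
  apply: contra yP => yPx; apply: (subvP sW0); rewrite !memv_cap yW0 yB andbT.
  by apply: subvP yPx; rewrite subv_add sPA -memvE.
apply: leq_trans (HM (P + <[x]> + <[y]>)%VS _); last by rewrite !dim_addv_line.
apply: subset_leq_card; apply/subsetP => W.
rewrite !inE => /andP [/and5P [-> sPW _ _ _] /andP [xW yW]].
by rewrite !subv_add sPW -!memvE xW yW.
Qed.

Lemma card_meet2_leq P A B k M1 M2 : (P <= A)%VS -> (P <= B)%VS ->
  (forall U, \dim U = (\dim P).+1 -> #|[set W | (\dim W == k) && (U <= W)%VS]| <= M1) ->
  (forall U, \dim U = (\dim P).+2 -> #|[set W | (\dim W == k) && (U <= W)%VS]| <= M2) ->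
  #|[set W | [&& \dim W == k, (P <= W)%VS, ~~ (W :&: A <= P)%VS & ~~ (W :&: B <= P)%VS]]|
  <= qint q (\dim (A :&: B) - \dim P) * M1
     + qint q (\dim A - \dim P) * qint q (\dim B - \dim P) * M2.
Proof.
move=> sPA sPB HM1 HM2; set S := [set W | _].
rewrite -(cardsID [set W | ~~ (W :&: (A :&: B) <= P)%VS] S); apply: leq_add.
  apply: leq_trans (card_meet_outside_leq _ HM1); last by rewrite subv_cap sPA.
  apply: subset_leq_card; apply/subsetP => W.
  by rewrite !inE => /andP [/and4P [-> -> _ _] ->].
apply: leq_trans (card_meet_both_leq sPA sPB HM2); apply: subset_leq_card.
by apply/subsetP => W; rewrite !inE negbK => /andP [-> /and4P [-> -> -> ->]].
Qed.

End SubspaceCounting.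

Section Orthogonal.
Variables (F : fieldType) (n : nat).
Local Notation V := 'rV[F]_n.
Implicit Types (u v : V) (U W : {vspace V}).
Local Open Scope ring_scope.

Definition dotv u v : F := \sum_(j < n) u 0 j * v 0 j.

Lemma dotvC : commutative dotv.
Proof. by move=> u v; apply: eq_bigr => j _; rewrite mulrC. Qed.

Lemma dotvDr u v w : dotv u (v + w) = dotv u v + dotv u w.
Proof. by rewrite /dotv -big_split; apply: eq_bigr => j _; rewrite mxE mulrDr. Qed.

Lemma dotv_sumr u m (c : 'I_m -> F) (b : 'I_m -> V) :
  dotv u (\sum_i c i *: b i) = \sum_i c i * dotv u (b i).
Proof.
rewrite /dotv; under eq_bigr do rewrite summxE mulr_sumr.
rewrite exchange_big; apply: eq_bigr => i _; rewrite mulr_sumr.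
by apply: eq_bigr => j _; rewrite mxE mulrCA.
Qed.

Definition perp_mx U : 'M[F]_(n, \dim U) := \matrix_(j, i) (vbasis U)`_i 0 j.

Definition perp U : {vspace V} := lker (linfun (mulmxr (perp_mx U))).

Lemma perpP U v : reflect {in U, forall u, dotv v u = 0} (v \in perp U).
Proof.
have dotv_basis i : (v *m perp_mx U) 0 i = dotv v (vbasis U)`_i.
  by rewrite !mxE; apply: eq_bigr => j _; rewrite mxE.
rewrite memv_ker lfunE /=; apply: (iffP eqP) => [vU0 u uU | vU0].
  rewrite (coord_vbasis uU) dotv_sumr big1 // => i _.
  by rewrite -dotv_basis vU0 mxE mulr0.
apply/rowP => i; rewrite dotv_basis mxE vU0 //.
by rewrite vbasis_mem // mem_nth // size_tuple.
Qed.

Lemma perpS U W : (U <= W)%VS -> (perp W <= perp U)%VS.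
Proof.
move=> sUW; apply/subvP => v /perpP vW; apply/perpP => u uU.
exact/vW/(subvP sUW).
Qed.

Lemma perpD U W : perp (U + W) = (perp U :&: perp W)%VS.
Proof.
apply/vspaceP => v; rewrite memv_cap; apply/perpP/andP => [vUW | [/perpP vU /perpP vW]].
  split; apply/perpP => u uX; apply: vUW; first exact: subvP (addvSl U W) _ uX.
  exact: subvP (addvSr U W) _ uX.
by move=> _ /memv_addP [u uU [w wW ->]]; rewrite dotvDr vU // vW // addr0.
Qed.

Lemma perp_full : perp fullv = 0%VS.
Proof.
apply/eqP; rewrite -subv0; apply/subvP => v /perpP vV0; rewrite memv0.
apply/eqP/rowP => j; have := vV0 (delta_mx 0 j) (memvf _).
rewrite /dotv (bigD1 j) //= big1 => [|k /negbTE kj]; last by rewrite !mxE kj andbF mulr0.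
by rewrite !mxE !eqxx mulr1 addr0.
Qed.

Lemma perpK_sub U : (U <= perp (perp U))%VS.
Proof. by apply/subvP => u uU; apply/perpP => v /perpP vU; rewrite dotvC vU. Qed.

Lemma dim_perp_ge U : (n <= \dim (perp U) + \dim U)%N.
Proof.
have := limg_ker_dim (linfun (mulmxr (perp_mx U))) (fullv : {vspace V}).
rewrite capfv dim_rV => dimV; rewrite -[X in (X <= _)%N]dimV leq_add2l.
by apply: leq_trans (dimvS (subvf _)) _; rewrite dim_rV.
Qed.

Lemma dimv_leq_n U : (\dim U <= n)%N.
Proof. by have := dimvS (subvf U); rewrite dim_rV. Qed.

Lemma dim_perp U : \dim (perp U) = (n - \dim U)%N.
Proof.
have perpUC0 : (perp U :&: perp U^C = 0)%VS by rewrite -perpD addv_complf perp_full.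
have := dimv_sum_cap (perp U) (perp U^C); rewrite perpUC0 dimv0 addn0.
have := dim_perp_ge U^C; rewrite dimv_compl dim_rV.
have := dim_perp_ge U; have := dimv_leq_n U; have := dimv_leq_n (perp U + perp U^C).
lia.
Qed.

Lemma perpK : involutive perp.
Proof.
move=> U; apply/eqP; rewrite eq_sym eqEdim perpK_sub !dim_perp.
have := dimv_leq_n U; lia.
Qed.

Lemma perp_inj : injective perp. Proof. exact: inv_inj perpK. Qed.

Lemma dim_perp_cap U W : (\dim U + \dim W = n)%N ->
  \dim (perp U :&: perp W) = \dim (U :&: W).
Proof.
rewrite -perpD dim_perp; have := dimv_sum_cap U W; have := dimv_leq_n (U + W).
lia.
Qed.

Lemma perp_capv_eq0 U W : (\dim U + \dim W = n)%N ->
  (perp U :&: perp W == 0)%VS = (U :&: W == 0)%VS.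
Proof. by move=> dUW; rewrite -!dimv_eq0 dim_perp_cap. Qed.

End Orthogonal.

(* The Gaussian binomials [6 choose 2]_q and [5 choose 2]_q, i.e. the numbers of
   planes through a point and of solids through a line of PG(6,q). *)
Definition gauss62 q := (1 + q ^ 2 + q ^ 4) * qint q 5.
Definition gauss52 q := (1 + q ^ 2) * qint q 5.

Section ProjectiveSixSpace.
Variable F : finFieldType.
Local Notation q := #|F|.
Implicit Types (U W A B S T : PGsub F).

Lemma card_planes_through_point U : \dim U = 1 ->
  #|[set W | (\dim W == 3) && (U <= W)%VS]| <= gauss62 q.
Proof.
move=> dU; have := @card_supspaces F 7 2 4 U; rewrite dU => /(_ erefl).
rewrite !big_ord_recr !big_ord0 /= [qint q 1]/qint big_ord1 !mul1n.
have -> : qint q 6 = qint q 2 * (1 + q ^ 2 + q ^ 4).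
  by rewrite /qint !big_ord_recr big_ord0 /=; ring.
by rewrite /gauss62 mulnCA [qint q 5 * _]mulnC mulnC leq_pmul2l ?qint_gt0.
Qed.

Lemma card_planes_through_line U : \dim U = 2 ->
  #|[set W | (\dim W == 3) && (U <= W)%VS]| <= qint q 5.
Proof.
move=> dU; have := @card_supspaces F 7 1 4 U; rewrite dU => /(_ erefl).
by rewrite !big_ord1 [qint q 1]/qint big_ord1 muln1.
Qed.

Lemma card_solids_through_line U : \dim U = 2 ->
  #|[set W | (\dim W == 4) && (U <= W)%VS]| <= gauss52 q.
Proof.
move=> dU; have := @card_supspaces F 7 2 3 U; rewrite dU => /(_ erefl).
rewrite !big_ord_recr !big_ord0 /= [qint q 1]/qint big_ord1 !mul1n.
have -> : qint q 4 = qint q 2 * (1 + q ^ 2).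
  by rewrite /qint !big_ord_recr big_ord0 /=; ring.
by rewrite /gauss52 -mulnA mulnC leq_pmul2l ?qint_gt0.
Qed.

Lemma card_solids_through_plane U : \dim U = 3 ->
  #|[set W | (\dim W == 4) && (U <= W)%VS]| <= qint q 4.
Proof.
move=> dU; have := @card_supspaces F 7 1 3 U; rewrite dU => /(_ erefl).
by rewrite !big_ord1 [qint q 1]/qint big_ord1 muln1.
Qed.

Lemma card_planes_meeting2 A B :
  #|[set W | [&& \dim W == 3, W :&: A != 0 & W :&: B != 0]%VS]|
  <= qint q (\dim (A :&: B)) * gauss62 q + qint q (\dim A) * qint q (\dim B) * qint q 5.
Proof.
have := card_meet2_leq (k := 3) (sub0v A) (sub0v B).
rewrite dimv0 !subn0 => /(_ _ _ card_planes_through_point card_planes_through_line).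
apply: leq_trans; apply: subset_leq_card; apply/subsetP => W.
by rewrite !inE sub0v !subv0.
Qed.

Lemma card_solids_meeting2 p S T : (p != 0)%R -> p \in S -> p \in T ->
  #|[set W | [&& \dim W == 4, (<[p]> <= W)%VS, ~~ (W :&: S <= <[p]>)%VS
                & ~~ (W :&: T <= <[p]>)%VS]]|
  <= qint q (\dim (S :&: T) - 1) * gauss52 q
     + qint q (\dim S - 1) * qint q (\dim T - 1) * qint q 4.
Proof.
rewrite !memvE => nz_p sPS sPT; have := card_meet2_leq (k := 4) sPS sPT.
rewrite dim_vline nz_p.
by apply; [exact: card_solids_through_line | exact: card_solids_through_plane].
Qed.

End ProjectiveSixSpace.

Section Flags.
Variable F : finFieldType.
Local Notation q := #|F|.
Local Notation flag := (PGsub F * PGsub F)%type.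
Implicit Types (f g : flag) (C : {set flag}).

Lemma flag23P f : is_flag23 f -> [/\ \dim f.1 = 3, \dim f.2 = 4 & (f.1 <= f.2)%VS].
Proof. by case/and3P => /eqP -> /eqP -> ->. Qed.

Lemma kneser_independent_flag C f : kneser_independent C -> f \in C ->
  [/\ \dim f.1 = 3, \dim f.2 = 4 & (f.1 <= f.2)%VS].
Proof. by case=> flag23C _ /flag23C /flag23P. Qed.

Lemma kneser_independent_meet C f g : kneser_independent C -> f \in C -> g \in C ->
  f != g -> (f.1 :&: g.2 != 0)%VS || (g.1 :&: f.2 != 0)%VS.
Proof.
by case=> _ nadjC fC gC nfg; move: (nadjC f g fC gC); rewrite /kneser_adj nfg /= negb_and.
Qed.

Definition dual_flag f : flag := (perp f.2, perp f.1).

Lemma dual_flagK : involutive dual_flag.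
Proof. by case=> E S; rewrite /dual_flag /= !perpK. Qed.

Lemma dual_flag_inj : injective dual_flag. Proof. exact: inv_inj dual_flagK. Qed.

Lemma flag23_dual f : is_flag23 f -> is_flag23 (dual_flag f).
Proof.
case/flag23P => dE dS sES.
by rewrite /is_flag23 /is_plane /is_solid /= !dim_perp dE dS perpS.
Qed.

Lemma kneser_independent_dual C : kneser_independent C -> kneser_independent (dual_flag @: C).
Proof.
move=> indC; case: (indC) => flag23C nadjC; split.
  by move=> _ /imsetP [f fC ->]; apply/flag23_dual/flag23C.
move=> _ _ /imsetP [f fC ->] /imsetP [g gC ->].
have [dfE dfS _] := kneser_independent_flag indC fC.
have [dgE dgS _] := kneser_independent_flag indC gC.
rewrite /kneser_adj /= (inj_eq dual_flag_inj) !perp_capv_eq0 ?dfE ?dfS ?dgE ?dgS //.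
by rewrite capvC [(g.2 :&: _)%VS]capvC [(_ == 0%VS) && _]andbC; apply: nadjC.
Qed.

Lemma card_dual_flag_set C (p : pred flag) :
  #|[set h in dual_flag @: C | p h]| = #|[set f in C | p (dual_flag f)]|.
Proof.
rewrite -[RHS](card_imset _ dual_flag_inj); apply: eq_card => h; rewrite [in LHS]inE.
apply/andP/imsetP => [[/imsetP [f fC ->] pf] | [f]]; first by exists f; rewrite ?inE ?fC.
by rewrite inE => /andP [fC pf] ->; rewrite imset_f.
Qed.

Definition plane_bounded C := forall E, is_plane E -> #|[set f in C | f.1 == E]| <= q.+1.
Definition solid_bounded C := forall S, is_solid S -> #|[set f in C | f.2 == S]| <= q.+1.

Lemma plane_bounded_dual C : solid_bounded C -> plane_bounded (dual_flag @: C).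
Proof.
move=> solidC E /eqP dE; rewrite card_dual_flag_set.
rewrite (eq_card (B := [set f in C | f.2 == perp E])); last first.
  by move=> f; rewrite !inE /= -(inj_eq (@perp_inj _ _)) perpK.
by apply: solidC; rewrite /is_solid dim_perp dE.
Qed.

Lemma solid_bounded_dual C : plane_bounded C -> solid_bounded (dual_flag @: C).
Proof.
move=> planeC S /eqP dS; rewrite card_dual_flag_set.
rewrite (eq_card (B := [set f in C | f.1 == perp S])); last first.
  by move=> f; rewrite !inE /= -(inj_eq (@perp_inj _ _)) perpK.
by apply: planeC; rewrite /is_plane dim_perp dS.
Qed.

End Flags.

Definition pairwise_meet_bound q :=
  (q.+1 * gauss62 q + qint q 3 * qint q 3 * qint q 5) * q.+1.
Definition solid_point_bound q :=
  (q.+1 * gauss52 q + qint q 3 * qint q 3 * qint q 4) * q.+1.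
Definition plane_meet_bound q :=
  qint q 3 * qint q 3 * qint q 5 * q.+1 + qint q 3 * solid_point_bound q
  + (q.+1 * gauss62 q + qint q 3 * qint q 4 * qint q 5) * q.+1.

Section IndependentSet.
Variables (F : finFieldType) (C : {set PGsub F * PGsub F}).
Hypotheses (indC : kneser_independent C) (planeC : plane_bounded C)
           (solidC : solid_bounded C).
Local Notation q := #|F|.
Local Notation flag := (PGsub F * PGsub F)%type.
Implicit Types (f g h : flag) (E : PGsub F).

Local Notation flagC := (kneser_independent_flag indC).

Lemma card_leq_planes (D : {set flag}) : D \subset C -> #|D| <= #|fst @: D| * q.+1.
Proof.
move=> sDC; apply: card_leq_image_fibres => f fD; have [dE _ _] := flagC (subsetP sDC f fD).
apply: leq_trans (planeC (introT eqP dE)); apply: subset_leq_card; apply/subsetP => g.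
by rewrite !inE => /andP [/(subsetP sDC) -> ->].
Qed.

Lemma card_leq_solids (D : {set flag}) : D \subset C -> #|D| <= #|snd @: D| * q.+1.
Proof.
move=> sDC; apply: card_leq_image_fibres => f fD; have [_ dS _] := flagC (subsetP sDC f fD).
apply: leq_trans (solidC (introT eqP dS)); apply: subset_leq_card; apply/subsetP => g.
by rewrite !inE => /andP [/(subsetP sDC) -> ->].
Qed.

Lemma card_flags_planes_meeting2 A B :
  #|[set g in C | (g.1 :&: A != 0)%VS && (g.1 :&: B != 0)%VS]|
  <= (qint q (\dim (A :&: B)) * gauss62 q + qint q (\dim A) * qint q (\dim B) * qint q 5)
     * q.+1.
Proof.
apply: leq_trans (card_leq_planes _) _; first by apply/subsetP => g; rewrite inE => /andP [].
apply: leq_mul (leq_trans _ (card_planes_meeting2 A B)) (leqnn _).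
apply: subset_leq_card; apply/subsetP => E /imsetP [g]; rewrite !inE.
move=> /and3P [gC gA gB] ->; have [dE _ _] := flagC gC.
by rewrite dE eqxx gA gB.
Qed.

Lemma card_pairwise_meeting_planes (D : {set flag}) : D \subset C ->
  {in D &, forall f g, (f.1 :&: g.1 != 0)%VS} -> #|D| <= pairwise_meet_bound q.
Proof.
move=> sDC meetD.
have [le1 | /card_gt1P [_ [_ [/imsetP [f0 f0D ->] /imsetP [f1 f1D ->] ne01]]]] :=
  leqP #|fst @: D| 1.
  apply: leq_trans (card_leq_planes sDC) (leq_mul (leq_trans le1 _) (leqnn _)).
  by rewrite ltn_addr // muln_gt0 /gauss62 !muln_gt0 !qint_gt0.
have [dE0 _ _] := flagC (subsetP sDC _ f0D); have [dE1 _ _] := flagC (subsetP sDC _ f1D).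
have sD : D \subset [set g in C | (g.1 :&: f0.1 != 0)%VS && (g.1 :&: f1.1 != 0)%VS].
  by apply/subsetP => g gD; rewrite inE (subsetP sDC) //= !meetD.
apply: leq_trans (subset_leq_card sD) (leq_trans (card_flags_planes_meeting2 _ _) _).
rewrite dE0 dE1 leq_mul2r leq_add2r leq_mul2r -(qint2 q) leq_qint ?orbT //.
by have := dimv_cap_ltl (etrans dE0 (esym dE1)) ne01; rewrite dE0.
Qed.

Lemma indep_solids_meet_off_point p f h : f \in C -> h \in C ->
  p \notin f.1 -> p \notin h.1 -> ~~ (h.2 :&: f.2 <= <[p]>)%VS.
Proof.
move=> fC hC pf1 ph1; have [_ _ sf] := flagC fC; have [_ dhS sh] := flagC hC.
have [->|nfh] := eqVneq f h.
  by apply/negP => /dimvS; rewrite capvv dhS dim_vline; case: (_ != _).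
case/orP: (kneser_independent_meet indC fC hC nfh) => meet.
  apply: contra (capv_not_sub (capv_line0 pf1) meet) => sub; apply: subv_trans sub.
  by rewrite subv_cap capvSr (subv_trans (capvSl _ _) sf).
apply: contra (capv_not_sub (capv_line0 ph1) meet) => sub; apply: subv_trans sub.
by rewrite subv_cap capvSr (subv_trans (capvSl _ _) sh).
Qed.

Lemma card_flags_solid_not_plane p : (p != 0)%R ->
  #|[set f in C | (p \in f.2) && (p \notin f.1)]| <= solid_point_bound q.
Proof.
move=> nz_p; set D := [set f in C | _].
have sDC : D \subset C by apply/subsetP => f; rewrite inE => /andP [].
apply: leq_trans (card_leq_solids sDC) (leq_mul _ (leqnn _)).
have [le1 | /card_gt1P [_ [_ [/imsetP [f0 f0D ->] /imsetP [f1 f1D ->] ne01]]]] :=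
  leqP #|snd @: D| 1.
  by rewrite (leq_trans le1) // ltn_addr // muln_gt0 /gauss52 !muln_gt0 !qint_gt0.
have [[f0C pf0 npf0] [f1C pf1 npf1]] : [/\ f0 \in C, p \in f0.2 & p \notin f0.1]
                               /\ [/\ f1 \in C, p \in f1.2 & p \notin f1.1].
  by move: f0D f1D; rewrite !inE => /and3P [? ? ?] /and3P [? ? ?].
have [_ dS0 _] := flagC f0C; have [_ dS1 _] := flagC f1C.
apply: leq_trans (leq_trans (subset_leq_card _) (card_solids_meeting2 nz_p pf0 pf1)) _.
  apply/subsetP => S /imsetP [h hD ->]; have [_ dhS _] := flagC (subsetP sDC _ hD).
  move: (hD); rewrite !inE => /and3P [hC ph2 ph1].
  by rewrite dhS -memvE ph2 (indep_solids_meet_off_point f0C hC npf0 ph1)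
             (indep_solids_meet_off_point f1C hC npf1 ph1).
rewrite dS0 dS1 leq_add2r leq_mul2r -(qint2 q) leq_qint ?orbT //.
by have := dimv_cap_ltl (etrans dS0 (esym dS1)) ne01; rewrite dS0 leq_subLR.
Qed.

Lemma card_flags_solid_meets_off_plane E : \dim E = 3 ->
  #|[set g in C | ~~ (E :&: g.2 <= g.1)%VS]| <= qint q 3 * solid_point_bound q.
Proof.
move=> dE; set c := q ^ \dim (0%VS : PGsub F) * q.-1.
rewrite -(leq_pmul2r (expn_predn_gt0 F (\dim (0%VS : PGsub F)))) -/c.
have -> : qint q 3 * solid_point_bound q * c
          = #|[set x in E | x \notin (0%VS : PGsub F)]| * solid_point_bound q.
  by rewrite card_vspaceD ?sub0v // -/c dE dimv0 subn0; ring.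
(* A flag g is counted at each of the q - 1 nonzero vectors of any line <[p]>
   with p in E :&: g.2 outside g.1. *)
apply: (card_mul_leq (R := fun g x => (x \in g.2) && (x \notin g.1))) => [g | x].
  rewrite inE => /andP [gC /subvPn [p /memv_capP [pE pg2] pg1]].
  have nz_p : (p != 0)%R by apply: contraNneq pg1 => ->; exact: mem0v.
  have line_p : ~~ (<[p]> <= 0)%VS by rewrite subv0 -dimv_eq0 dim_vline nz_p.
  apply: leq_trans (card_vspaceD_ge (sub0v _) line_p) _; rewrite -/c.
  apply: subset_leq_card; apply/subsetP => x; rewrite !inE => /andP [xp nz_x].
  have sub_p (U : PGsub F) : p \in U -> x \in U by rewrite memvE => /subvP; apply.
  rewrite nz_x (sub_p E) // (sub_p g.2) //=.
  by apply: contra nz_x => xg1; rewrite -(capv_line0 pg1) memv_cap xg1.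
rewrite inE memv0 => /andP [_ nz_x]; apply: leq_trans (card_flags_solid_not_plane nz_x).
apply: subset_leq_card; apply/subsetP => g; rewrite !inE.
by move=> /andP [/andP [-> _] ->].
Qed.

Lemma card_flags_plane_meets E f1 : \dim E = 3 -> f1 \in C -> (E :&: f1.1 = 0)%VS ->
  #|[set g in C | (g.1 :&: E != 0)%VS]| <= plane_meet_bound q.
Proof.
move=> dE f1C dis; have [dE1 dS1 sE1S1] := flagC f1C.
have cover : [set g in C | (g.1 :&: E != 0)%VS] \subset
    [set g in C | (g.1 :&: E != 0)%VS && (g.1 :&: f1.1 != 0)%VS]
    :|: [set g in C | ~~ (f1.1 :&: g.2 <= g.1)%VS]
    :|: [set g in C | (g.1 :&: E != 0)%VS && (g.1 :&: f1.2 != 0)%VS].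
  apply/subsetP => g; rewrite !inE => /andP [gC gE]; rewrite gC gE /=.
  have [g11|] := eqVneq (g.1 :&: f1.1)%VS 0%VS; last by [].
  have ngf1 : g != f1 by apply: contraNneq gE => ->; rewrite capvC dis.
  case/orP: (kneser_independent_meet indC gC f1C ngf1) => [->|meet]; first by rewrite !orbT.
  by rewrite capv_not_sub ?orbT // capvC.
apply: leq_trans (subset_leq_card cover) _; rewrite /plane_meet_bound.
apply: leq_trans (leq_card_setU _ _) (leq_add _ _).
  apply: leq_trans (leq_card_setU _ _) (leq_add _ _).
    by apply: leq_trans (card_flags_planes_meeting2 _ _) _; rewrite dis dimv0 qint0 dE dE1.
  exact: card_flags_solid_meets_off_plane.
apply: leq_trans (card_flags_planes_meeting2 _ _) _.
rewrite dE dS1 leq_mul2r leq_add2r leq_mul2r -(qint2 q) leq_qint ?orbT //.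
by have := dimv_cap_disjoint_leq dis sE1S1; rewrite dE1 dS1; lia.
Qed.

Lemma indep_flag_cover f0 : f0 \in C ->
  C \subset [set g in C | (g.1 :&: f0.1 != 0)%VS]
    :|: [set g in C | (perp g.2 :&: perp f0.2 != 0)%VS]
    :|: [set g in C | ~~ (f0.1 :&: g.2 <= g.1)%VS]
    :|: [set g in C | ~~ (perp f0.2 :&: perp g.1 <= perp g.2)%VS].
Proof.
move=> f0C; have [dE0 dS0 _] := flagC f0C.
apply/subsetP => g gC; rewrite !inE gC /=; have [dE _ _] := flagC gC.
case: (eqVneq (g.1 :&: f0.1)%VS 0%VS) => [g0 | //].
case: (eqVneq (perp g.2 :&: perp f0.2)%VS 0%VS) => [g2 | //].
have nf0g : f0 != g by apply: contra_eqN g0 => /eqP <-; rewrite capvv -dimv_eq0 dE0.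
case/orP: (kneser_independent_meet indC f0C gC nf0g) => meet.
  by rewrite capv_not_sub // capvC.
have g2' : (perp f0.2 :&: perp g.2 = 0)%VS by rewrite capvC.
have meet' : (perp f0.2 :&: perp g.1 != 0)%VS by rewrite perp_capv_eq0 ?dS0 ?dE // capvC.
by rewrite (capv_not_sub g2' meet') !orbT.
Qed.

End IndependentSet.

Section CaseAnalysis.
Variables (F : finFieldType) (C : {set PGsub F * PGsub F}).
Hypotheses (indC : kneser_independent C) (planeC : plane_bounded C)
           (solidC : solid_bounded C).
Local Notation q := #|F|.
Local Notation D := (dual_flag @: C).

Let indD := kneser_independent_dual indC.
Let planeD := plane_bounded_dual solidC.
Let solidD := solid_bounded_dual planeC.

Local Notation flagC := (kneser_independent_flag indC).

Lemma card_indep_disjoint_case f0 f1 f2 : f0 \in C -> f1 \in C -> f2 \in C ->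
  (f0.1 :&: f1.1 = 0)%VS -> (perp f0.2 :&: perp f2.2 = 0)%VS ->
  #|C| <= 2 * plane_meet_bound q + 2 * (qint q 3 * solid_point_bound q).
Proof.
move=> f0C f1C f2C dis01 dis02; have [dE0 dS0 _] := flagC f0C.
have dP0 : \dim (perp f0.2) = 3 by rewrite dim_perp dS0.
apply: leq_trans (subset_leq_card (indep_flag_cover indC f0C)) _.
rewrite !mul2n -!addnn addnA.
apply: leq_trans (leq_card_setU _ _) (leq_add _ _); last first.
  rewrite -(card_dual_flag_set C (fun h => ~~ (perp f0.2 :&: h.2 <= h.1)%VS)).
  exact: card_flags_solid_meets_off_plane indD solidD _ dP0.
apply: leq_trans (leq_card_setU _ _) (leq_add _ _).
  apply: leq_trans (leq_card_setU _ _) (leq_add _ _).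
    exact: card_flags_plane_meets indC planeC solidC _ _ dE0 f1C dis01.
  rewrite -(card_dual_flag_set C (fun h => h.1 :&: perp f0.2 != 0)%VS).
  exact: card_flags_plane_meets indD planeD solidD _ _ dP0 (imset_f _ f2C) dis02.
exact: card_flags_solid_meets_off_plane indC solidC _ dE0.
Qed.

Lemma card_indep_meeting_case :
  {in C, forall f, [forall g in C, (f.1 :&: g.1 != 0)%VS]
                   || [forall g in C, (perp f.2 :&: perp g.2 != 0)%VS]} ->
  #|C| <= 2 * pairwise_meet_bound q.
Proof.
move=> meetC; set NP := [set f in C | [forall g in C, (f.1 :&: g.1 != 0)%VS]].
set NQ := [set f in C | [forall g in C, (perp f.2 :&: perp g.2 != 0)%VS]].
have cover : C \subset NP :|: NQ by apply/subsetP => f fC; rewrite !inE fC meetC.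
apply: leq_trans (subset_leq_card cover) (leq_trans (leq_card_setU _ _) _).
rewrite mul2n -addnn; apply: leq_add.
  apply: (card_pairwise_meeting_planes indC planeC).
    by apply/subsetP => f; rewrite inE => /andP [].
  by move=> f g; rewrite !inE => /andP [_ /forall_inP meetf] /andP [gC _]; apply: meetf.
rewrite -(card_imset _ (@dual_flag_inj F)); apply: (card_pairwise_meeting_planes indD planeD).
  by apply/subsetP => h /imsetP [f]; rewrite inE => /andP [fC _] ->; rewrite imset_f.
move=> h h' /imsetP [f]; rewrite inE => /andP [_ /forall_inP meetf] ->.
by case/imsetP => g; rewrite inE => /andP [gC _] ->; apply: meetf.
Qed.

Lemma card_indep_leq :
  #|C| <= maxn (2 * plane_meet_bound q + 2 * (qint q 3 * solid_point_bound q))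
               (2 * pairwise_meet_bound q).
Proof.
case: (boolP [exists f in C, [exists g in C, (f.1 :&: g.1 == 0)%VS]
                              && [exists g in C, (perp f.2 :&: perp g.2 == 0)%VS]]).
  case/exists_inP => f0 f0C /andP [/exists_inP [f1 f1C /eqP dis01]].
  case/exists_inP => f2 f2C /eqP dis02.
  by rewrite leq_max (card_indep_disjoint_case f0C f1C f2C dis01 dis02).
rewrite negb_exists_in => /forall_inP none; rewrite leq_max card_indep_meeting_case ?orbT //.
by move=> f /none; rewrite negb_and !negb_exists_in.
Qed.

End CaseAnalysis.

Lemma disjoint_case_bound_leq q : 7 <= q ->
  2 * plane_meet_bound q + 2 * (qint q 3 * solid_point_bound q)
  <= 24 * q ^ 10 + 79 * q ^ 9 + 155 * q ^ 8 + 210 * q ^ 7 + 216 * q ^ 6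
     + 187 * q ^ 5 + 140 * q ^ 4 + 93 * q ^ 3 + 51 * q ^ 2 + 22 * q + 5.
Proof.
move=> q_ge7; have -> : 2 * plane_meet_bound q + 2 * (qint q 3 * solid_point_bound q)
    = 12 * q ^ 10 + 52 * q ^ 9 + 128 * q ^ 8 + 230 * q ^ 7 + 322 * q ^ 6
      + 362 * q ^ 5 + 328 * q ^ 4 + 240 * q ^ 3 + 138 * q ^ 2 + 58 * q + 14.
  rewrite /plane_meet_bound /solid_point_bound /gauss62 /gauss52 /qint.
  by rewrite !big_ord_recr !big_ord0 /=; ring.
have step k : 7 * q ^ k <= q ^ k.+1 by rewrite expnS leq_mul2r q_ge7 orbT.
move: (step 0) (step 1) (step 2) (step 3) (step 4) (step 5) (step 6) (step 7) (step 8) (step 9).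
rewrite expn0 expn1.
move: (q ^ 10) (q ^ 9) (q ^ 8) (q ^ 7) (q ^ 6) (q ^ 5) (q ^ 4) (q ^ 3) (q ^ 2); lia.
Qed.

Lemma meeting_case_bound_leq q :
  2 * pairwise_meet_bound q
  <= 24 * q ^ 10 + 79 * q ^ 9 + 155 * q ^ 8 + 210 * q ^ 7 + 216 * q ^ 6
     + 187 * q ^ 5 + 140 * q ^ 4 + 93 * q ^ 3 + 51 * q ^ 2 + 22 * q + 5.
Proof.
have -> : 2 * pairwise_meet_bound q
    = 2 * q ^ 10 + 8 * q ^ 9 + 18 * q ^ 8 + 32 * q ^ 7 + 46 * q ^ 6
      + 54 * q ^ 5 + 52 * q ^ 4 + 42 * q ^ 3 + 28 * q ^ 2 + 14 * q + 4.
  rewrite /pairwise_meet_bound /gauss62 /qint.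
  by rewrite !big_ord_recr !big_ord0 /=; ring.
move: (q ^ 10) (q ^ 9) (q ^ 8) (q ^ 7) (q ^ 6) (q ^ 5) (q ^ 4) (q ^ 3) (q ^ 2); lia.
Qed.

Theorem proposition4p6 (F : finFieldType) (C : {set PGsub F * PGsub F}) :
  let q := #|F| in
  (7 <= q)%N ->
  kneser_independent C ->
  (forall E : PGsub F, is_plane E -> (#|[set f in C | f.1 == E]| <= q.+1)%N) ->
  (forall S : PGsub F, is_solid S -> (#|[set f in C | f.2 == S]| <= q.+1)%N) ->
  (#|C| <= 24 * q ^ 10 + 79 * q ^ 9 + 155 * q ^ 8 + 210 * q ^ 7 + 216 * q ^ 6
          + 187 * q ^ 5 + 140 * q ^ 4 + 93 * q ^ 3 + 51 * q ^ 2 + 22 * q + 5)%N.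
Proof.
move=> q q_ge7 indC planeC solidC.
apply: leq_trans (card_indep_leq indC planeC solidC) _.
by rewrite geq_max disjoint_case_bound_leq // meeting_case_bound_leq.
Qed.
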